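(* Let $\psi$ be an existential formula in the first-order language with equality over one binary relation symbol $R$, using only the variables $x,y,z$. Let $v:\{x,y,z\}\to Q$ and $w:\{x,y,z\}\to P$ be alike assignments. If $(Q,T)\models\psi[v]$ then $(P,Z)\models\psi[w]$.
   Context: $(P,Z)$: $P=\{0,1,2,3,4\}$, $Z=\{(i,j): i<5,\ j\equiv i\pm1 \pmod 5\}$. $(Q,T)$: $Q=\{0,1,2,3\}$, $T=\{(i,j): i<4,\ j\equiv i\pm1 \pmod 4\}$. An existential formula is one built from atomic formulas ($Ruv$ or $u=v$) and negations of atomic formulas using only conjunction, disjunction and existential quantification; ''using only the variables $x,y,z$'' means every variable occurring, free or bound, is among $x,y,z$. Assignments $v$ into $Q$ and $w$ into $P$ are alike if the map sending $v(u)\mapsto w(u)$ for $u\in\{x,y,z\}$ is a well-defined bijection from the range of $v$ onto the range of $w$ which is an isomorphism between the induced substructures of $(Q,T)$ and $(P,Z)$ on these ranges. *)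

From mathcomp Require Import all_boot.
Set Implicit Arguments. Unset Strict Implicit. Unset Printing Implicit Defensive.

Inductive var := vx | vy | vz.

Definition var_eqb (a b : var) : bool :=
  match a, b with
  | vx, vx | vy, vy | vz, vz => true
  | _, _ => false
  end.

(* Existential formulas over one binary relation symbol R using only the
   variables x, y, z: atomic formulas R u v, u = v, their negations, closed
   under conjunction, disjunction and existential quantification. *)
Inductive eform :=
  | FRel   (u v : var)
  | FEq    (u v : var)
  | FNRel  (u v : var)
  | FNEq   (u v : var)
  | FAnd   (f g : eform)
  | FOr    (f g : eform)
  | FEx    (u : var) (f : eform).

Definition upd (D : Type) (a : var -> D) (u : var) (d : D) : var -> D :=
  fun u' => if var_eqb u u' then d else a u'.

Fixpoint sat (D : Type) (Rel : D -> D -> Prop) (a : var -> D) (f : eform)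
  : Prop :=
  match f with
  | FRel u v => Rel (a u) (a v)
  | FEq u v => a u = a v
  | FNRel u v => ~ Rel (a u) (a v)
  | FNEq u v => a u <> a v
  | FAnd f g => sat Rel a f /\ sat Rel a g
  | FOr f g => sat Rel a f \/ sat Rel a g
  | FEx u f => exists d : D, sat Rel (upd a u d) f
  end.

Definition cyc (n : nat) (i j : 'I_n) : Prop :=
  j %% n = (i + 1) %% n \/ (j + 1) %% n = i %% n.

Definition Z5 : 'I_5 -> 'I_5 -> Prop := @cyc 5.
Definition T4 : 'I_4 -> 'I_4 -> Prop := @cyc 4.

(* v into (D1,R1) and w into (D2,R2) are alike: the map v(u) |-> w(u)
   (u in {x,y,z}) is well defined, is a bijection from range v onto range w,
   and is an isomorphism between the induced substructures on these ranges. *)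
Definition alike (D1 D2 : Type) (R1 : D1 -> D1 -> Prop) (R2 : D2 -> D2 -> Prop)
  (v : var -> D1) (w : var -> D2) : Prop :=
  (forall u u', v u = v u' -> w u = w u') /\
  (* injective (surjectivity onto range w is automatic) *)
  (forall u u', w u = w u' -> v u = v u') /\
  (forall u u', R1 (v u) (v u') <-> R2 (w u) (w u')).

From mathcomp Require Import all_boot zmodp.

Set Implicit Arguments.
Unset Strict Implicit.
Unset Printing Implicit Defensive.

(* Existential formulas are preserved along any relation between assignments
   that respects atomic formulas and has the "forth" property: a witness for a
   quantified variable on the left can be matched on the right. Being alike
   has this property from the 4-cycle to the 5-cycle, because the new witness
   only has to be placed relative to the values of the two other variables,
   and every configuration of at most three points of the 4-cycle occurs in
   the 5-cycle (two points at distance 2 still have a common neighbour there).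
   The converse fails: two adjacent points of the 5-cycle have a common
   non-neighbour. Everything being finite, the forth property is checked by
   computation. *)

Section ExistentialTransfer.

Variables (D1 D2 : Type) (R1 : D1 -> D1 -> Prop) (R2 : D2 -> D2 -> Prop).

Hypothesis alike_forth : forall v w u d, alike R1 R2 v w ->
  exists e, alike R1 R2 (upd v u d) (upd w u e).

Lemma sat_alike psi v w : alike R1 R2 v w -> sat R1 v psi -> sat R2 w psi.
Proof.
elim: psi v w => [a b|a b|a b|a b|f IHf g IHg|f IHf g IHg|u f IHf] v w vw /=;
  have [vw_eq [wv_eq vw_rel]] := vw.
- by move/vw_rel.
- exact: vw_eq.
- by move=> nR R; apply/nR/vw_rel.
- by move=> nE E; apply/nE/wv_eq.
- by case=> /IHf-/(_ w vw) ? /IHg-/(_ w vw).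
- by case=> [/IHf|/IHg]/(_ w vw); [left|right].
- case=> d /IHf fd; have [e vwe] := alike_forth u d vw.
  by exists e; apply: fd.
Qed.

End ExistentialTransfer.

Definition cycb n (i j : 'I_n) : bool :=
  (j %% n == (i + 1) %% n) || ((j + 1) %% n == i %% n).

Lemma cycP n (i j : 'I_n) : reflect (cyc i j) (cycb i j).
Proof. by apply: (iffP orP) => -[] /eqP; by [left|right]. Qed.

Definition vars : seq var := [:: vx; vy; vz].

Lemma all_varsP (P : pred var) : reflect (forall u, P u) (all P vars).
Proof.
apply: (iffP idP) => [/and3P[Px Py /andP[Pz _]] [] //|allP].
by rewrite /= !allP.
Qed.

Section Alike.

Variables n m : nat.

Definition alikeb (v : var -> 'I_n) (w : var -> 'I_m) : bool :=
  all (fun u => all (fun u' =>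
    ((v u == v u') == (w u == w u')) && (cycb (v u) (v u') == cycb (w u) (w u')))
    vars) vars.

Lemma alikeP v w : reflect (alike (@cyc n) (@cyc m) v w) (alikeb v w).
Proof.
apply: (iffP (all_varsP _)) => [vw | [vw_eq [wv_eq vw_rel]] u].
  split; [|split] => u u'; have /all_varsP/(_ u')/andP[/eqP E /eqP C] := vw u.
  - by move/eqP; rewrite E => /eqP.
  - by move/eqP; rewrite -E => /eqP.
  - by split=> /cycP; [rewrite C|rewrite -C] => /cycP.
apply/all_varsP => u'; apply/andP; split; apply/eqP.
  by apply/idP/idP => /eqP/[dup] E; [move/vw_eq|move/wv_eq] => ->.
by apply/idP/idP => /cycP/vw_rel/cycP.
Qed.

Lemma eq_alikeb v v' w w' : v =1 v' -> w =1 w' -> alikeb v w = alikeb v' w'.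
Proof.
by move=> Ev Ew; apply: eq_all => u; apply: eq_all => u'; rewrite !Ev !Ew.
Qed.

End Alike.

Lemma eq_upd (D : Type) (v v' : var -> D) u d : v =1 v' -> upd v u d =1 upd v' u d.
Proof. by move=> Ev u'; rewrite /upd; case: var_eqb. Qed.

Definition asg (D : Type) (a b c : D) : var -> D :=
  fun u => match u with vx => a | vy => b | vz => c end.

(* Unlike [ord_enum], whose [insub] goes through the opaque [idP], this list
   reduces under [vm_compute]. *)
Definition ords n : seq 'I_n.+1 := [seq inZp i | i <- iota 0 n.+1].

Lemma mem_ords n (i : 'I_n.+1) : i \in ords n.
Proof. by rewrite -(valZpK i) map_f // mem_iota ltn_ord. Qed.

Definition all_asg n (P : pred (var -> 'I_n.+1)) : bool :=
  all (fun a => all (fun b => all (fun c => P (asg a b c))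
    (ords n)) (ords n)) (ords n).

Lemma all_asg_forall n (P : pred (var -> 'I_n.+1)) :
  (forall v v', v =1 v' -> P v = P v') -> all_asg P -> forall v, P v.
Proof.
move=> P_ext allP_ v; rewrite (P_ext v (asg (v vx) (v vy) (v vz))); last by case.
by move: allP_ => /allP/(_ _ (mem_ords _))/allP/(_ _ (mem_ords _))/allP->;
  rewrite ?mem_ords.
Qed.

Lemma eq_all_asg n (P Q : pred (var -> 'I_n.+1)) : P =1 Q -> all_asg P = all_asg Q.
Proof. by move=> PQ; do 3!apply: eq_all => ?; apply: PQ. Qed.

(* An [if] rather than [==>]: [vm_compute] is call-by-value and would
   otherwise evaluate the consequent for every pair. *)
Definition forth_at (v : var -> 'I_4) (w : var -> 'I_5) : bool :=
  if alikeb v w then all (fun u => all (fun d =>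
    has (fun e => alikeb (upd v u d) (upd w u e)) (ords 4)) (ords 3)) vars
  else true.

Lemma eq_forth_at v v' w w' : v =1 v' -> w =1 w' -> forth_at v w = forth_at v' w'.
Proof.
move=> Ev Ew; rewrite /forth_at (eq_alikeb Ev Ew).
congr (if _ then _ else _); apply: eq_all => u; apply: eq_all => d; apply: eq_has => e.
by apply: eq_alikeb; apply: eq_upd.
Qed.

Lemma forth_at_all : all_asg (fun v => all_asg (forth_at v)).
Proof. by vm_compute. Qed.

Lemma cycle_alike_forth v w u d : alike T4 Z5 v w ->
  exists e, alike T4 Z5 (upd v u d) (upd w u e).
Proof.
have forth v' w' : forth_at v' w'.
  have forth_ext v1 v2 : v1 =1 v2 -> all_asg (forth_at v1) = all_asg (forth_at v2).
    by move=> E; apply: eq_all_asg => w1; apply: eq_forth_at.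
  apply: (all_asg_forall (P := forth_at v')) => [w1 w2|]; first exact: eq_forth_at.
  exact: (all_asg_forall forth_ext forth_at_all).
move/alikeP/(implyP (forth v w))/all_varsP/(_ u)/allP/(_ d (mem_ords _)).
by case/hasP=> e _ /alikeP; exists e.
Qed.

Theorem mainTheorem4 (psi : eform) (v : var -> 'I_4) (w : var -> 'I_5) :
  alike T4 Z5 v w -> sat T4 v psi -> sat Z5 w psi.
Proof. apply: sat_alike; exact: cycle_alike_forth. Qed.
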